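(* The abelian group $D_2(H)$ is isomorphic to the abelian group $G$ given by the following presentation. Generators: symbols $t(a,b;c,d)$ for $a,b,c,d\in H$ and symbols $s(a,b)$ for $a,b\in H$. Relations, for all $a,b,c,d,e\in H$: (1) $t$ is multilinear in its four arguments; (2) (AS) $t(a,b;c,d)=-t(b,a;c,d)=-t(a,b;d,c)$ and $t(a,b;c,d)=t(c,d;a,b)$; (3) (IHX) $t(a,b;c,d)=t(a,d;c,b)+t(a,c;b,d)$; (4) $s(a,a)=0$ and $s(a,b)=s(b,a)$; (5) $2\,s(a,b)=t(a,b;a,b)$; (6) $s(a+b,c)=s(a,c)+s(b,c)+t(a,c;b,c)$. An isomorphism $G\to D_2(H)$ is given by $t(a,b;c,d)\mapsto T(a,b;c,d)$ and $s(a,b)\mapsto a\odot b$.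
   Context: Let $g\ge1$ and let $\Sigma_{g,1}$ be a compact connected oriented surface of genus $g$ with one boundary component. Let $H=H_1(\Sigma_{g,1};\mathbb Z)\cong\mathbb Z^{2g}$ with intersection form $\omega:H\times H\to\mathbb Z$. $\mathcal L(H)=\bigoplus_{k\ge1}\mathcal L_k(H)$ is the free Lie ring on $H$, embedded in the tensor algebra $T(H)$ via $[x,y]=x\otimes y-y\otimes x$. Put $D_k(H):=\ker\big(H\otimes\mathcal L_{k+1}(H)\to\mathcal L_{k+2}(H),\ h\otimes u\mapsto[h,u]\big)$. For $a,b,c,d\in H$ put $T(a,b;c,d):=a\otimes[b,[c,d]]+b\otimes[[c,d],a]+c\otimes[d,[a,b]]+d\otimes[[a,b],c]$ and $a\odot b:=a\otimes[b,[a,b]]+b\otimes[[a,b],a]$; these are elements of $D_2(H)$ ($T(a,b;c,d)$ is the expansion of the uni-trivalent tree with two trivalent vertices, leaves $a,b$ attached to one vertex and $c,d$ to the other, and $a\odot b=\tfrac12 T(a,b;a,b)$). *)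

From HB Require Import structures.
From mathcomp Require Import all_boot all_algebra.

Set Implicit Arguments.
Unset Strict Implicit.
Unset Printing Implicit Defensive.

Import GRing.Theory.
Local Open Scope ring_scope.

(* H = H_1(Sigma_{g,1}; Z) = Z^n with n = 2g, realised as integer row vectors.
   The degree-k part T_k(H) = H^{(x)k} of the tensor algebra is realised as
   integer-valued functions on words (k-tuples) in the standard basis of H. *)

Section Tensors.
Variable n : nat.

Definition H := 'rV[int]_n.
Definition Tk (k : nat) := {ffun k.-tuple 'I_n -> int}.

Definition emb (a : H) : Tk 1 := [ffun w => a 0 (tnth w ord0)].

Definition tmul p q (x : Tk p) (y : Tk q) : Tk (p + q) :=
  [ffun w => x [tuple tnth w (lshift q i) | i < p]
           * y [tuple tnth w (rshift p i) | i < q]].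

Definition tcastT p q (e : p = q) (x : Tk p) : Tk q :=
  [ffun w => x (tcast (esym e) w)].

Definition br p q (x : Tk p) (y : Tk q) : Tk (p + q) :=
  tmul x y - tcastT (addnC q p) (tmul y x).

(* L_k(H): the degree-k part of the free Lie ring on H inside T(H),
   i.e. the additive subgroups generated by H and closed under brackets *)
Inductive lie : forall k, Tk k -> Prop :=
  | lie_gen (a : H) : lie (emb a)
  | lie_br p q (x : Tk p) (y : Tk q) : lie x -> lie y -> lie (br x y)
  | lie_0 k : lie (0 : Tk k)
  | lie_add k (x y : Tk k) : lie x -> lie y -> lie (x + y)
  | lie_opp k (x : Tk k) : lie x -> lie (- x).

(* H (x) L_k(H), viewed inside T_1 (x) T_k = T_(1+k) *)
Inductive HL k : Tk (1 + k) -> Prop :=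
  | HL_gen (a : H) (u : Tk k) : lie u -> HL (tmul (emb a) u)
  | HL_0 : HL 0
  | HL_add x y : HL x -> HL y -> HL (x + y)
  | HL_opp x : HL x -> HL (- x).

(* the bracket map T_1 (x) T_k -> T_(1+k), h (x) u |-> [h,u] = h u - u h,
   written on basis words: (h (x) u) rotated gives u (x) h *)
Definition rotidx k (i : 'I_k.+1) : 'I_k.+1 := inord ((i + k) %% k.+1).
Definition bmap k (x : Tk k.+1) : Tk k.+1 :=
  [ffun w => x w - x [tuple tnth w (rotidx i) | i < k.+1]].

(* D_k(H) = ker (H (x) L_(k+1) -> L_(k+2)) *)
Definition Dk k (x : Tk k.+2) : Prop := HL (k := k.+1) x /\ bmap x = 0.

Definition Tel (a b c d : H) : Tk 4 :=
  (tmul (emb a) (br (emb b) (br (emb c) (emb d))) : Tk 4)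
  + (tmul (emb b) (br (br (emb c) (emb d)) (emb a)) : Tk 4)
  + (tmul (emb c) (br (emb d) (br (emb a) (emb b))) : Tk 4)
  + (tmul (emb d) (br (br (emb a) (emb b)) (emb c)) : Tk 4).

Definition odot (a b : H) : Tk 4 :=
  (tmul (emb a) (br (emb b) (br (emb a) (emb b))) : Tk 4)
  + (tmul (emb b) (br (br (emb a) (emb b)) (emb a)) : Tk 4).

(* The presented group G: free abelian group on symbols t(a,b;c,d), s(a,b),
   modulo relations (1)-(6).  Elements of the free abelian group are
   represented by formal sums (lists of (coefficient, symbol)); two formal sums
   represent the same element iff their coefficient functions agree. *)
Definition Sym := ((H * H * H * H) + (H * H))%type.
Definition fsum := seq (int * Sym).

Definition coef (f : fsum) (s : Sym) : int := \sum_(p <- f | p.2 == s) p.1.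

Definition tsym (a b c d : H) : fsum := [:: (1, inl (a, b, c, d))].
Definition ssym (a b : H) : fsum := [:: (1, inr (a, b))].
Definition fneg (f : fsum) : fsum := [seq (- p.1, p.2) | p <- f].

(* the defining relators (each relation written as "lhs - rhs") *)
Inductive relator : fsum -> Prop :=
  | rel_lin1 a a' b c d :
      relator (tsym (a + a') b c d ++ fneg (tsym a b c d) ++ fneg (tsym a' b c d))
  | rel_lin2 a b b' c d :
      relator (tsym a (b + b') c d ++ fneg (tsym a b c d) ++ fneg (tsym a b' c d))
  | rel_lin3 a b c c' d :
      relator (tsym a b (c + c') d ++ fneg (tsym a b c d) ++ fneg (tsym a b c' d))
  | rel_lin4 a b c d d' :
      relator (tsym a b c (d + d') ++ fneg (tsym a b c d) ++ fneg (tsym a b c d'))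
  | rel_as1 a b c d : relator (tsym a b c d ++ tsym b a c d)
  | rel_as2 a b c d : relator (tsym a b c d ++ tsym a b d c)
  | rel_as3 a b c d : relator (tsym a b c d ++ fneg (tsym c d a b))
  | rel_ihx a b c d :
      relator (tsym a b c d ++ fneg (tsym a d c b) ++ fneg (tsym a c b d))
  | rel_s0 a : relator (ssym a a)
  | rel_ssym a b : relator (ssym a b ++ fneg (ssym b a))
  | rel_s2 a b : relator ((2, inr (a, b)) :: fneg (tsym a b a b))
  | rel_sadd a b c :
      relator (ssym (a + b) c ++ fneg (ssym a c) ++ fneg (ssym b c)
             ++ fneg (tsym a c b c)).

Definition inR (f : fsum) : Prop :=
  exists rs : seq (int * fsum),
    (forall r, r \in rs -> relator r.2) /\
    (forall s, coef f s = \sum_(r <- rs) r.1 * coef r.2 s).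

Definition gen (s : Sym) : Tk 4 :=
  match s with
  | inl (a, b, c, d) => Tel a b c d
  | inr (a, b) => odot a b
  end.

Definition Phi (f : fsum) : Tk 4 := \sum_(p <- f) (gen p.2) *~ p.1.

End Tensors.

From HB Require Import structures.
From mathcomp Require Import all_boot all_algebra ring zify.
Import GRing.Theory.
Local Open Scope ring_scope.
Set Implicit Arguments.
Unset Strict Implicit.

(* Let Phi be the induced map from formal
   sums to T_4(H) and R the subgroup generated by the relators.  Everything is
   proved for H = Z^n with arbitrary n, in the standard basis e_0, ..., e_(n-1):
   a tensor of T_4(H) is read through its coefficients on words (i,j,k,l), on
   which T and (.) are explicit quartic forms.
   1. Phi kills every relator (a polynomial identity), hence all of R.
   2. T and (.) lie in H (x) L_3 and are invariant under rotation of words; on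
      H (x) L_3 the bracket map vanishes exactly on rotation-invariant tensors,
      so the image of Phi lies in D_2(H).
   3. Normal forms: a finite family of "normal" symbols, indexed by sorted
      quadruples of basis letters.  By multilinearity, AS, IHX and (4)-(6),
      every formal sum is congruent modulo R to a combination of them.
   4. Duality: each normal index y has a coordinate functional on T_4(H) (one
      or two signed coefficients) taking the value delta_xy on Phi of the
      normal symbol x.
   5. Rigidity: a rotation-invariant tensor satisfying, in its last three
      slots, the degree-3 law of Lie elements, and whose normal coordinates
      vanish, is zero.
   Surjectivity onto D_2(H) follows from 4 and 5, injectivity from 3 and 4. *)

Section WordCoefficients.
Variable n : nat.
Implicit Types (a b c d : H n) (i j k l : 'I_n).

Lemma tk4_ext (x y : Tk n 4) :
  (forall i j k l, x [tuple i; j; k; l] = y [tuple i; j; k; l]) -> x = y.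
Proof.
move=> Exy; apply/ffunP => -[[|i [|j [|k [|l [|]]]]] Hs] //.
by have -> : Tuple Hs = [tuple i; j; k; l] by exact: val_inj.
Qed.

Lemma addfE m (x y : Tk n m) w : (x + y) w = x w + y w.
Proof. by rewrite ffunE. Qed.
Lemma oppfE m (x : Tk n m) w : (- x) w = - x w.
Proof. by rewrite ffunE. Qed.

Lemma emb_word a i : emb a [tuple i] = a 0 i.
Proof. by rewrite ffunE. Qed.

Lemma tmul_word13 (x : Tk n 1) (y : Tk n 3) i j k l :
  tmul x y [tuple i; j; k; l] = x [tuple i] * y [tuple j; k; l].
Proof.
rewrite ffunE; congr (x _ * y _); apply: eq_from_tnth => m; rewrite tnth_mktuple.
  by case: m => [[|//] ?].
by case: m => [[|[|[|//]]] ?].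
Qed.

Lemma br_word11 (x y : Tk n 1) i j :
  br x y [tuple i; j] = x [tuple i] * y [tuple j] - y [tuple i] * x [tuple j].
Proof.
rewrite !ffunE; congr (x _ * y _ - y _ * x _); apply: eq_from_tnth => m;
  rewrite tnth_mktuple ?tcastE; by case: m => [[|[|//]] ?].
Qed.

Lemma br_word12 (x : Tk n 1) (y : Tk n 2) i j k :
  br x y [tuple i; j; k] = x [tuple i] * y [tuple j; k] - y [tuple i; j] * x [tuple k].
Proof.
rewrite !ffunE; congr (x _ * y _ - y _ * x _); apply: eq_from_tnth => m;
  rewrite tnth_mktuple ?tcastE; by case: m => [[|[|[|//]]] ?].
Qed.

Lemma br_word21 (x : Tk n 2) (y : Tk n 1) i j k :
  br x y [tuple i; j; k] = x [tuple i; j] * y [tuple k] - y [tuple i] * x [tuple j; k].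
Proof.
rewrite !ffunE; congr (x _ * y _ - y _ * x _); apply: eq_from_tnth => m;
  rewrite tnth_mktuple ?tcastE; by case: m => [[|[|[|//]]] ?].
Qed.

Definition letters a i j k l (m : nat) : int :=
  match m with 0 => a 0 i | 1 => a 0 j | 2 => a 0 k | _ => a 0 l end.

Definition Tform (A B C D : nat -> int) : int :=
  A 0%N * (B 1%N * (C 2%N * D 3%N - D 2%N * C 3%N) - (C 1%N * D 2%N - D 1%N * C 2%N) * B 3%N)
  + B 0%N * ((C 1%N * D 2%N - D 1%N * C 2%N) * A 3%N - A 1%N * (C 2%N * D 3%N - D 2%N * C 3%N))
  + C 0%N * (D 1%N * (A 2%N * B 3%N - B 2%N * A 3%N) - (A 1%N * B 2%N - B 1%N * A 2%N) * D 3%N)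
  + D 0%N * ((A 1%N * B 2%N - B 1%N * A 2%N) * C 3%N - C 1%N * (A 2%N * B 3%N - B 2%N * A 3%N)).

Definition odot_form (A B : nat -> int) : int :=
  A 0%N * (B 1%N * (A 2%N * B 3%N - B 2%N * A 3%N) - (A 1%N * B 2%N - B 1%N * A 2%N) * B 3%N)
  + B 0%N * ((A 1%N * B 2%N - B 1%N * A 2%N) * A 3%N - A 1%N * (A 2%N * B 3%N - B 2%N * A 3%N)).

Lemma Tel_word a b c d i j k l :
  Tel a b c d [tuple i; j; k; l] =
  Tform (letters a i j k l) (letters b i j k l) (letters c i j k l) (letters d i j k l).
Proof. by rewrite /Tel !addfE !tmul_word13 !br_word12 !br_word21 !br_word11 !emb_word. Qed.

Lemma odot_word a b i j k l :
  odot a b [tuple i; j; k; l] = odot_form (letters a i j k l) (letters b i j k l).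
Proof. by rewrite /odot !addfE !tmul_word13 !br_word12 !br_word21 !br_word11 !emb_word. Qed.

End WordCoefficients.

(* The degree-4 tensor with coefficient F i j k l on the word (i,j,k,l); it is
   locked so that T and (.), once rewritten into this form, are only ever
   inspected through their coefficients. *)
HB.lock Definition tensor_of n (F : 'I_n -> 'I_n -> 'I_n -> 'I_n -> int) : Tk n 4 :=
  [ffun w => F (tnth w ord0) (tnth w (inord 1)) (tnth w (inord 2)) (tnth w (inord 3))].

Lemma tensor_of_word n F (i j k l : 'I_n) : tensor_of F [tuple i; j; k; l] = F i j k l.
Proof. by rewrite unlock ffunE /tnth /= !inordK. Qed.

Lemma Tel_tensor n (a b c d : H n) : Tel a b c d =
  tensor_of (fun i j k l => Tform (letters a i j k l) (letters b i j k l)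
                                  (letters c i j k l) (letters d i j k l)).
Proof. by apply: tk4_ext => i j k l; rewrite tensor_of_word Tel_word. Qed.

Lemma odot_tensor n (a b : H n) : odot a b =
  tensor_of (fun i j k l => odot_form (letters a i j k l) (letters b i j k l)).
Proof. by apply: tk4_ext => i j k l; rewrite tensor_of_word odot_word. Qed.

Section PhiHom.
Variable n : nat.
Implicit Types (a b c d : H n) (f g : fsum n).

Lemma Phi_cat f g : Phi (f ++ g) = Phi f + Phi g.
Proof. by rewrite /Phi big_cat. Qed.
Lemma Phi_neg f : Phi (fneg f) = - Phi f.
Proof. by rewrite /Phi /fneg big_map -sumrN; apply: eq_bigr => p _; rewrite mulrNz. Qed.
Lemma Phi_cons (p : int * Sym n) f : Phi (p :: f) = gen p.2 *~ p.1 + Phi f.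
Proof. by rewrite /Phi big_cons. Qed.
Lemma Phi_tsym a b c d : Phi (tsym a b c d) = Tel a b c d.
Proof. by rewrite /Phi big_seq1. Qed.
Lemma Phi_ssym a b : Phi (ssym a b) = odot a b.
Proof. by rewrite /Phi big_seq1. Qed.

(* Part (1) of the theorem: each defining relation becomes a polynomial
   identity between the quartic forms above. *)
Lemma Phi_relator (r : fsum n) : relator r -> Phi r = 0.
Proof.
case=> *; rewrite ?Phi_cat ?Phi_neg ?Phi_tsym ?Phi_ssym ?Phi_cons /Phi ?big_nil /=
  ?Tel_tensor ?odot_tensor; apply: tk4_ext => i j k l;
rewrite ?addfE ?oppfE ?ffunMzE ?tensor_of_word ?ffunE /Tform /odot_form /letters /= ?mxE ?mulrzz;
ring.
Qed.
End PhiHom.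

Lemma mulrz_ind (V : zmodType) (P : V -> Prop) :
  P 0 -> (forall x y, P x -> P y -> P (x + y)) -> (forall x, P x -> P (- x)) ->
  forall x (k : int), P x -> P (x *~ k).
Proof.
move=> P0 PD PN x k Px.
have Pn m : P (x *+ m) by elim: m => [|m IH]; rewrite ?mulr0n ?mulrS //; apply: PD.
by case: k => m; rewrite ?NegzE ?mulrNz; [apply: Pn | apply: PN; apply: Pn].
Qed.

Lemma Phi_ind n (P : Tk n 4 -> Prop) :
  P 0 -> (forall x y, P x -> P y -> P (x + y)) -> (forall x, P x -> P (- x)) ->
  (forall s, P (gen s)) -> forall f, P (Phi f).
Proof.
move=> P0 PD PN Pg; elim=> [|p f IH]; first by rewrite /Phi big_nil.
by rewrite Phi_cons; apply: (PD) => //; apply: mulrz_ind.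
Qed.

Section ImageInD2.
Variable n : nat.
Implicit Types (i j k l : 'I_n) (s : Sym n) (f : fsum n).

(* Linear identities satisfied by Lie elements of low degree: vanishing in
   degree 0, antisymmetry in degree 2, and in degree 3 the identity
   u(i,j,l) + u(j,i,l) + u(j,l,i) = 0, which holds for the bracket of a letter
   with an antisymmetric tensor in either order. *)
Definition lie_law (m : nat) : Tk n m -> Prop :=
  match m with
  | 0 => fun x => x = 0
  | 2 => fun x => forall i j, x [tuple i; j] = - x [tuple j; i]
  | 3 => fun x => forall i j l, x [tuple i; j; l] + x [tuple j; i; l] + x [tuple j; l; i] = 0
  | _ => fun _ => True
  end.

Lemma lie_law0 m : lie_law (0 : Tk n m).
Proof. by case: m => [|[|[|[|m]]]] /= //; intros; rewrite !ffunE ?oppr0 ?addr0. Qed.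

Lemma lie_lawD m (x y : Tk n m) : lie_law x -> lie_law y -> lie_law (x + y).
Proof.
case: m x y => [|[|[|[|m]]]] x y //=.
- by move=> -> ->; rewrite addr0.
- by move=> Hx Hy i j; rewrite !addfE Hx Hy opprD.
- move=> Hx Hy i j l; rewrite !addfE.
  by have := Hx i j l; have := Hy i j l; lia.
Qed.

Lemma lie_lawN m (x : Tk n m) : lie_law x -> lie_law (- x).
Proof.
case: m x => [|[|[|[|m]]]] x //=.
- by move=> ->; rewrite oppr0.
- by move=> Hx i j; rewrite !oppfE Hx.
- by move=> Hx i j l; rewrite !oppfE -!opprD Hx oppr0.
Qed.

Lemma br0l p q (y : Tk n q) : br (0 : Tk n p) y = 0.
Proof. by apply/ffunP => w; rewrite !ffunE mul0r mulr0 subr0. Qed.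
Lemma br0r p q (x : Tk n p) : br x (0 : Tk n q) = 0.
Proof. by apply/ffunP => w; rewrite !ffunE mul0r mulr0 subr0. Qed.

Lemma lie_law_high m (x : Tk n m) : (3 < m)%N -> lie_law x.
Proof. by case: m x => [|[|[|[|m]]]]. Qed.

Lemma lie_lie_law m (x : Tk n m) : lie x -> lie_law x.
Proof.
elim=> {m x} [//| p q x y _ Hx _ Hy | m | m x y _ Hx _ Hy | m x _ Hx].
- case: (ltnP 3 (p + q)) => big; first exact: lie_law_high.
  case: p x Hx big => [|p] x Hx big; first by move: Hx => /= ->; rewrite br0l; apply: lie_law0.
  case: q y Hy big => [|q] y Hy big; first by move: Hy => /= ->; rewrite br0r; apply: lie_law0.
  case: p x Hx big => [|[|[|p]]] x Hx big; case: q y Hy big => [|[|[|q]]] y Hy big //=.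
  + by move=> i j; rewrite !br_word11; ring.
  + by move=> i j l; rewrite !br_word12 (Hy j i) (Hy l i); ring.
  + by move=> i j l; rewrite !br_word21 (Hx j i) (Hx l i); ring.
- exact: lie_law0.
- exact: lie_lawD.
- exact: lie_lawN.
Qed.

Definition tail_law (x : Tk n 4) := forall h i j l,
  x [tuple h; i; j; l] + x [tuple h; j; i; l] + x [tuple h; j; l; i] = 0.

Lemma tail_law_subgroup : [/\ tail_law 0,
  forall x y, tail_law x -> tail_law y -> tail_law (x + y)
  & forall x, tail_law x -> tail_law (- x)].
Proof.
split=> [h i j l | x y Hx Hy h i j l | x Hx h i j l].
- by rewrite !ffunE !addr0.
- by rewrite !addfE; have := Hx h i j l; have := Hy h i j l; lia.
- by rewrite !oppfE -!opprD Hx oppr0.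
Qed.

Lemma HL_tail_law (x : Tk n 4) : HL (k := 3) x -> tail_law x.
Proof.
have [L0 LD LN] := tail_law_subgroup.
elim=> {x} [a u Hu h i j l||x y _ Hx _ Hy|x _ Hx]; [|exact: L0|exact: LD|exact: LN].
by rewrite !tmul_word13 -!mulrDr; have /= -> := lie_lie_law Hu; rewrite mulr0.
Qed.

(* Rotation invariance of coefficients, (i,j,k,l) |-> (l,i,j,k): on H (x) L_3
   the bracket map is x |-> x - (x o rotation), so D_2 is cut out by it. *)
Definition rot_invariant (x : Tk n 4) :=
  forall i j k l, x [tuple i; j; k; l] = x [tuple l; i; j; k].

Lemma bmap_word (x : Tk n 4) i j k l :
  bmap (k := 3) x [tuple i; j; k; l] = x [tuple i; j; k; l] - x [tuple l; i; j; k].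
Proof.
rewrite ffunE; congr (_ - x _); apply: eq_from_tnth => m; rewrite tnth_mktuple.
by case: m => [[|[|[|[|//]]]] Hm]; rewrite /tnth /rotidx /= ?inordK.
Qed.

Lemma bmap_eq0P (x : Tk n 4) : bmap (k := 3) x = 0 <-> rot_invariant x.
Proof.
split=> [E i j k l | R]; last by apply: tk4_ext => i j k l; rewrite bmap_word ffunE R subrr.
by apply/eqP; rewrite -subr_eq0 -bmap_word E ffunE.
Qed.

Lemma rot_invariant_subgroup : [/\ rot_invariant 0,
  forall x y, rot_invariant x -> rot_invariant y -> rot_invariant (x + y)
  & forall x, rot_invariant x -> rot_invariant (- x)].
Proof.
split=> [i j k l | x y Hx Hy i j k l | x Hx i j k l]; first by rewrite !ffunE.
- by rewrite !addfE Hx Hy.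
- by rewrite !oppfE Hx.
Qed.

Lemma gen_HL s : HL (k := 3) (gen s).
Proof.
case: s => [[[[a b] c] d]|[a b]] /=.
  exact: (HL_add (HL_add (HL_add
    (HL_gen a (lie_br (lie_gen b) (lie_br (lie_gen c) (lie_gen d))))
    (HL_gen b (lie_br (lie_br (lie_gen c) (lie_gen d)) (lie_gen a))))
    (HL_gen c (lie_br (lie_gen d) (lie_br (lie_gen a) (lie_gen b)))))
    (HL_gen d (lie_br (lie_br (lie_gen a) (lie_gen b)) (lie_gen c)))).
exact: (HL_add
  (HL_gen a (lie_br (lie_gen b) (lie_br (lie_gen a) (lie_gen b))))
  (HL_gen b (lie_br (lie_br (lie_gen a) (lie_gen b)) (lie_gen a)))).
Qed.

Lemma gen_rot_invariant s : rot_invariant (gen s).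
Proof.
case: s => [[[[a b] c] d]|[a b]] i j k l /=; rewrite ?Tel_tensor ?odot_tensor !tensor_of_word
  /Tform /odot_form /letters /=; ring.
Qed.

Lemma Phi_rot_invariant f : rot_invariant (Phi f).
Proof.
have [R0 RD RN] := rot_invariant_subgroup.
exact: (Phi_ind R0 RD RN gen_rot_invariant).
Qed.

Lemma Phi_D2 f : Dk (k := 2) (Phi f).
Proof.
split; last exact/bmap_eq0P/Phi_rot_invariant.
exact: (Phi_ind (@HL_0 n 3) (@HL_add n 3) (@HL_opp n 3) gen_HL).
Qed.
End ImageInD2.

(* The Kronecker symbol on generator symbols, locked so that coefficient
   computations are carried out by `ring` with these symbols as atoms. *)
HB.lock Definition sym_delta n (x y : Sym n) : int := (x == y)%:R.

Lemma sym_deltaE n (x y : Sym n) : sym_delta x y = (x == y)%:R.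
Proof. by rewrite unlock. Qed.

Section FormalSums.
Variable n : nat.
Implicit Types (a b c d : H n) (f g : fsum n) (s : Sym n).

Lemma coef_nil s : coef [::] s = 0.
Proof. by rewrite /coef big_nil. Qed.
Lemma coef_cons p f s : coef (p :: f) s = p.1 * sym_delta p.2 s + coef f s.
Proof.
by rewrite /coef big_cons sym_deltaE; case: eqP => _ /=; rewrite ?mulr1 ?mulr0 ?add0r.
Qed.
Lemma coef_cat f g s : coef (f ++ g) s = coef f s + coef g s.
Proof. by rewrite /coef big_cat. Qed.
Lemma coef_neg f s : coef (fneg f) s = - coef f s.
Proof. by rewrite /coef /fneg big_map -sumrN. Qed.
Lemma coef_tsym a b c d s : coef (tsym a b c d) s = sym_delta (inl (a, b, c, d)) s.
Proof. by rewrite coef_cons coef_nil addr0 mul1r. Qed.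
Lemma coef_ssym a b s : coef (ssym a b) s = sym_delta (inr (a, b)) s.
Proof. by rewrite coef_cons coef_nil addr0 mul1r. Qed.

Lemma inR_ext f g : inR f -> (forall s, coef f s = coef g s) -> inR g.
Proof. by move=> [rs [Hrel Hcoef]] Efg; exists rs; split=> // s; rewrite -Efg. Qed.
Lemma inR_nil : inR (@nil (int * Sym n)).
Proof. by exists [::]; split=> // s; rewrite coef_nil big_nil. Qed.
Lemma inR_relator (r : fsum n) : relator r -> inR r.
Proof.
move=> Hr; exists [:: (1, r)]; split; last by move=> s; rewrite big_seq1 mul1r.
by move=> r'; rewrite mem_seq1 => /eqP ->.
Qed.
Lemma inR_cat f g : inR f -> inR g -> inR (f ++ g).
Proof.
move=> [rs [Hrel Hcoef]] [rs' [Hrel' Hcoef']]; exists (rs ++ rs'); split.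
  by move=> r; rewrite mem_cat => /orP[]; [apply: Hrel | apply: Hrel'].
by move=> s; rewrite coef_cat big_cat Hcoef Hcoef'.
Qed.
Lemma inR_neg f : inR f -> inR (fneg f).
Proof.
move=> [rs [Hrel Hcoef]]; exists [seq (- r.1, r.2) | r <- rs]; split.
  by move=> r /mapP [r' Hr' ->]; exact: (Hrel r').
by move=> s; rewrite coef_neg Hcoef big_map -sumrN; apply: eq_bigr => r _; rewrite mulNr.
Qed.

Lemma Phi_coef f (U : seq (Sym n)) : uniq U -> {subset map snd f <= U} ->
  Phi f = \sum_(s <- U) gen s *~ coef f s.
Proof.
move=> uU; elim: f => [|p f IH] sub.
  by rewrite /Phi big_nil big1 // => s _; rewrite coef_nil mulr0z.
have pU : p.2 \in U by apply: sub; rewrite inE eqxx.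
rewrite Phi_cons IH; last by move=> s Hs; apply: sub; rewrite inE Hs orbT.
under [RHS]eq_bigr => s _ do rewrite coef_cons mulrzDr.
rewrite big_split /=; congr (_ + _).
rewrite (bigD1_seq p.2) //= sym_deltaE eqxx mulr1 big1 ?addr0 // => s.
by rewrite sym_deltaE eq_sym => /negbTE ->; rewrite mulr0 mulr0z.
Qed.

Lemma Phi_inR f : inR f -> Phi f = 0.
Proof.
move=> [rs [Hrel Hcoef]].
set U := undup (map snd f ++ flatten [seq map snd r.2 | r <- rs]).
have uU : uniq U by apply: undup_uniq.
rewrite (@Phi_coef f U) //; last by move=> s Hs; rewrite mem_undup mem_cat Hs.
have Phi_r r : r \in rs -> Phi r.2 = \sum_(s <- U) gen s *~ coef r.2 s.
  move=> Hr; apply: Phi_coef => // s Hs; rewrite mem_undup mem_cat; apply/orP; right.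
  by apply/flattenP; exists (map snd r.2) => //; apply/mapP; exists r.
transitivity (\sum_(r <- rs) Phi r.2 *~ r.1); last first.
  by rewrite big_seq big1 // => r Hr; rewrite Phi_relator ?mul0rz //; apply: Hrel.
under eq_bigr => s _ do rewrite Hcoef mulrz_sumr.
rewrite exchange_big big_seq [RHS]big_seq; apply: eq_bigr => r Hr.
by rewrite Phi_r // mulrz_suml; apply: eq_bigr => s _; rewrite mulrC mulrzA.
Qed.
End FormalSums.
Arguments inR_nil {n}.

Ltac coef_ring := move=> ?;
  rewrite !(coef_cat, coef_neg, coef_tsym, coef_ssym, coef_cons, coef_nil); ring.

Definition ev n (i : 'I_n) : H n := delta_mx 0 i.

Lemma evE n (i j : 'I_n) : ev i 0 j = (j == i)%:R.
Proof. by rewrite /ev mxE eqxx. Qed.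

Notation nidx n := ('I_n * 'I_n * 'I_n * 'I_n * bool)%type.

Definition normal n (x : nidx n) : bool :=
  let: (a, b, c, d, t) := x in
  [|| [&& a == b, (b < c)%N, c == d & ~~ t], [&& a == b, (b < c)%N, (c < d)%N & ~~ t],
      [&& (a < b)%N, b == c, (c < d)%N & ~~ t], [&& (a < b)%N, (b < c)%N, c == d & ~~ t]
    | [&& (a < b)%N, (b < c)%N & (c < d)%N]].

Definition nsym n (x : nidx n) : Sym n :=
  let: (a, b, c, d, t) := x in
  if a == b then (if c == d then inr (ev a, ev c) else inl (ev a, ev c, ev a, ev d))
  else if b == c then inl (ev b, ev a, ev b, ev d)
  else if c == d then inl (ev c, ev a, ev c, ev b)
  else if t then inl (ev a, ev d, ev b, ev c) else inl (ev a, ev b, ev c, ev d).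

(* The coordinate functional of a normal index: a signed sum of one or two
   coefficients of a tensor, dual to the normal symbols (see ncoord_nsym). *)
Definition ncoord n (x : nidx n) (y : Tk n 4) : int :=
  let: (a, b, c, d, t) := x in
  if a == b then (if c == d then - y [tuple a; a; c; c] else - y [tuple a; a; c; d])
  else if b == c then - y [tuple b; b; a; d]
  else if c == d then - y [tuple c; c; a; b]
  else if t then - y [tuple a; b; c; d] - y [tuple a; b; d; c] else - y [tuple a; b; d; c].

Definition normal_enum n : seq (nidx n) := [seq x <- enum {: nidx n} | normal x].

Lemma normal_enum_uniq n : uniq (normal_enum n).
Proof. by rewrite filter_uniq // enum_uniq. Qed.
Lemma mem_normal_enum n (x : nidx n) : (x \in normal_enum n) = normal x.
Proof. by rewrite mem_filter mem_enum andbT. Qed.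

Definition ncomb n (c : nidx n -> int) : fsum n := [seq (c x, nsym x) | x <- normal_enum n].

Lemma coef_ncomb n (c : nidx n -> int) s :
  coef (ncomb c) s = \sum_(x <- normal_enum n | nsym x == s) c x.
Proof. by rewrite /coef /ncomb big_map. Qed.

Definition reducible n (f : fsum n) := exists c : nidx n -> int, inR (f ++ fneg (ncomb c)).

Section Reducible.
Variable n : nat.
Implicit Types (f g : fsum n) (s : Sym n).

Lemma reducible_ext f g : reducible f -> (forall s, coef f s = coef g s) -> reducible g.
Proof.
move=> [c Hc] Efg; exists c; apply: (inR_ext Hc) => s.
by rewrite !coef_cat !coef_neg Efg.
Qed.

Lemma reducible_nil : reducible (@nil (int * Sym n)).
Proof.
exists (fun _ => 0); apply: (inR_ext inR_nil) => s.
by rewrite coef_cat coef_neg coef_nil coef_ncomb big1 // oppr0 addr0.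
Qed.

Lemma reducible_cat f g : reducible f -> reducible g -> reducible (f ++ g).
Proof.
move=> [c Hc] [c' Hc']; exists (fun x => c x + c' x).
apply: (inR_ext (inR_cat Hc Hc')) => s.
rewrite !coef_cat !coef_neg !coef_ncomb big_split /=; ring.
Qed.

Lemma reducible_neg f : reducible f -> reducible (fneg f).
Proof.
move=> [c Hc]; exists (fun x => - c x); apply: (inR_ext (inR_neg Hc)) => s.
rewrite !(coef_cat, coef_neg, coef_ncomb) sumrN; ring.
Qed.

Lemma reducible_rel f g : inR (f ++ g) -> reducible g -> reducible f.
Proof.
move=> Hfg Rg; have [c Hc] := reducible_neg Rg.
exists c; apply: (inR_ext (inR_cat Hfg Hc)) => s.
rewrite !(coef_cat, coef_neg); ring.
Qed.

Lemma reducible_eq f g : inR (f ++ fneg g) -> reducible g -> reducible f.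
Proof. by move=> Hfg Rg; apply: reducible_rel Hfg (reducible_neg Rg). Qed.

Lemma inR_reducible f : inR f -> reducible f.
Proof. by move=> Hf; apply: (@reducible_rel f [::]) reducible_nil; rewrite cats0. Qed.

Lemma reducible_nsym (x : nidx n) : normal x -> reducible [:: (1, nsym x)].
Proof.
move=> nx; exists (fun y => (y == x)%:R); apply: (inR_ext inR_nil) => s.
rewrite coef_nil coef_cat coef_neg coef_ncomb coef_cons coef_nil addr0 mul1r big_mkcond.
rewrite (bigD1_seq x) ?normal_enum_uniq ?mem_normal_enum //= eqxx big1 ?addr0;
  last by move=> y /negbTE ->; case: ifP.
by rewrite sym_deltaE; case: ifP => _ /=; ring.
Qed.

Lemma reducible_scale s (k : int) : reducible [:: (1, s)] -> reducible [:: (k, s)].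
Proof.
move=> R1.
have Rn (m : nat) : reducible [:: (m%:Z, s)].
  elim: m => [|m IH].
    by apply: (reducible_ext reducible_nil) => s'; rewrite coef_nil coef_cons coef_nil mul0r addr0.
  apply: (reducible_ext (reducible_cat R1 IH)) => s'.
  by rewrite coef_cat !coef_cons !coef_nil intS; ring.
case: k => m; first exact: Rn.
apply: (reducible_ext (reducible_neg (Rn m.+1))) => s'.
by rewrite coef_neg !coef_cons !coef_nil /= ?NegzE; ring.
Qed.

Lemma reducible_all : (forall s, reducible [:: (1, s)]) -> forall f, reducible f.
Proof.
move=> R1; elim=> [|p f IH]; first exact: reducible_nil.
apply: (reducible_ext (reducible_cat (reducible_scale p.1 (R1 p.2)) IH)) => s.
by rewrite coef_cat !coef_cons coef_nil addr0.
Qed.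
End Reducible.

Ltac decide_letters := repeat match goal with
 | |- context [ @eq_op _ ?x ?y ] =>
     first [ rewrite (eqxx x) | rewrite (_ : (x == y) = false); last (apply/eqP => ?; subst; lia) ]
 | |- context [ (?x < ?y)%N ] =>
     first [ rewrite (_ : (x < y)%N = true); last lia | rewrite (_ : (x < y)%N = false); last lia ]
 end.

Section Reduction.
Variable n : nat.
Implicit Types (a b c d : H n) (i j k l : 'I_n) (f g : fsum n) (s : Sym n).

Lemma reducible_as1 a b c d : reducible (tsym b a c d) -> reducible (tsym a b c d).
Proof. exact: reducible_rel (inR_relator (rel_as1 a b c d)). Qed.
Lemma reducible_as2 a b c d : reducible (tsym a b d c) -> reducible (tsym a b c d).
Proof. exact: reducible_rel (inR_relator (rel_as2 a b c d)). Qed.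
Lemma reducible_as3 a b c d : reducible (tsym c d a b) -> reducible (tsym a b c d).
Proof. exact: reducible_eq (inR_relator (rel_as3 a b c d)). Qed.

(* t(a,a;c,d) and t(a,b;c,c) lie in R: by IHX and AS,
   t(a,a;c,d) = t(a,d;c,a) + t(a,c;a,d) = t(a,d;c,a) - t(a,d;c,a). *)
Lemma inR_tsym_diag_left a c d : inR (tsym a a c d).
Proof.
apply: (inR_ext (inR_cat (inR_relator (rel_ihx a a c d))
  (inR_cat (inR_relator (rel_as2 a d c a)) (inR_neg (inR_relator (rel_as3 a d a c)))))).
coef_ring.
Qed.
Lemma inR_tsym_diag_right a b c : inR (tsym a b c c).
Proof.
apply: (inR_ext (inR_cat (inR_relator (rel_as3 a b c c)) (inR_tsym_diag_left c a b))).
coef_ring.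
Qed.

Local Notation red_t i j k l := (reducible (tsym (ev i) (ev j) (ev k) (ev l))).

Ltac by_normal x :=
  have := @reducible_nsym n x; rewrite /normal /nsym /=; decide_letters; by apply.

(* For letters i < j and k < l, every t(e_i,e_j;e_k,e_l) is reducible: it is
   a normal symbol, or is obtained from normal ones by AS, IHX or (5). *)
Lemma red_t_abcd (a b c d : 'I_n) : (a < b < c)%N -> (c < d)%N -> red_t a b c d.
Proof. by case/andP=> ab bc cd; by_normal (a, b, c, d, false). Qed.
Lemma red_t_adbc (a b c d : 'I_n) : (a < b < c)%N -> (c < d)%N -> red_t a d b c.
Proof. by case/andP=> ab bc cd; by_normal (a, b, c, d, true). Qed.
Lemma red_t_acbd (a b c d : 'I_n) : (a < b < c)%N -> (c < d)%N -> red_t a c b d.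
Proof.
move=> abc cd; apply: reducible_rel (inR_relator (rel_ihx (ev a) (ev c) (ev b) (ev d))) _.
by apply: reducible_cat; apply: reducible_neg; [apply: red_t_adbc | apply: red_t_abcd].
Qed.
Lemma red_t_abac (a b c : 'I_n) : (a < b < c)%N -> red_t a b a c.
Proof. by case/andP=> ab bc; by_normal (a, a, b, c, false). Qed.
Lemma red_t_babc (a b c : 'I_n) : (a < b < c)%N -> red_t b a b c.
Proof. by case/andP=> ab bc; by_normal (a, b, b, c, false). Qed.
Lemma red_t_cacb (a b c : 'I_n) : (a < b < c)%N -> red_t c a c b.
Proof. by case/andP=> ab bc; by_normal (a, b, c, c, false). Qed.
Lemma red_t_abbc (a b c : 'I_n) : (a < b < c)%N -> red_t a b b c.
Proof. by move=> abc; apply: reducible_as1; apply: red_t_babc. Qed.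
Lemma red_t_acbc (a b c : 'I_n) : (a < b < c)%N -> red_t a c b c.
Proof. by move=> abc; apply: reducible_as1; apply: reducible_as2; apply: red_t_cacb. Qed.
Lemma red_t_abab (a b : 'I_n) : (a < b)%N -> red_t a b a b.
Proof.
move=> ab; have : reducible (ssym (ev a) (ev b)) by by_normal (a, a, b, b, false).
move=> /(reducible_scale 2) Rs; apply: (reducible_eq _ Rs).
apply: (inR_ext (inR_neg (inR_relator (rel_s2 (ev a) (ev b))))); coef_ring.
Qed.

Lemma red_t_lex (i j k l : 'I_n) : (i < j)%N -> (k < l)%N -> (i < k)%N -> red_t i j k l.
Proof.
move=> ij kl ik; case: (ltngtP j k) => [jk | kj | /val_inj jk].
- by apply: red_t_abcd; rewrite ?ij.
- case: (ltngtP j l) => [jl | lj | /val_inj jl].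
  + by apply: red_t_acbd; rewrite ?ik.
  + by apply: red_t_adbc; rewrite ?ik.
  + by subst; apply: red_t_acbc; rewrite ik.
- by subst; apply: red_t_abbc; rewrite ij.
Qed.

Lemma red_t_ordered (i j k l : 'I_n) : (i < j)%N -> (k < l)%N -> red_t i j k l.
Proof.
move=> ij kl; case: (ltngtP i k) => [ik | ki | /val_inj ik].
- exact: red_t_lex.
- by apply: reducible_as3; apply: red_t_lex.
- subst; case: (ltngtP j l) => [jl | lj | /val_inj jl].
  + by apply: red_t_abac; rewrite ij.
  + by apply: reducible_as3; apply: red_t_abac; rewrite kl.
  + by subst; apply: red_t_abab.
Qed.

Lemma red_t_basis (i j k l : 'I_n) : red_t i j k l.
Proof.
have diag_r i' j' k' : red_t i' j' k' k' by apply/inR_reducible/inR_tsym_diag_right.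
case: (ltngtP i j) => [ij | ji | /val_inj ij];
  last by subst; apply/inR_reducible/inR_tsym_diag_left.
all: case: (ltngtP k l) => [kl | lk | /val_inj kl]; try by subst; apply: diag_r.
- exact: red_t_ordered.
- by apply: reducible_as2; apply: red_t_ordered.
- by apply: reducible_as1; apply: red_t_ordered.
- by apply: reducible_as1; apply: reducible_as2; apply: red_t_ordered.
Qed.

Lemma basis_ind (P : H n -> Prop) : P 0 -> (forall x y, P x -> P y -> P (x + y)) ->
  (forall x, P x -> P (- x)) -> (forall i, P (ev i)) -> forall a, P a.
Proof.
move=> P0 PD PN Pe a; rewrite (row_sum_delta a); elim/big_ind: _ => // j _.
by rewrite -[a 0 j]intz scaler_int; apply: (@mulrz_ind _ P P0 PD PN _ _ (Pe j)).
Qed.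

Lemma reducible_additive (F : H n -> fsum n) :
  (forall x y, exists g, reducible g /\ inR (F (x + y) ++ fneg (F x) ++ fneg (F y) ++ g)) ->
  (forall i, reducible (F (ev i))) -> forall a, reducible (F a).
Proof.
move=> HF He.
have R0 : reducible (F 0).
  have [g [Rg Hg]] := HF 0 0; rewrite addr0 in Hg.
  by apply: (reducible_eq _ Rg); apply: (inR_ext (inR_neg Hg)); coef_ring.
apply: basis_ind => // [x y Rx Ry | x Rx].
  have [g [Rg Hg]] := HF x y; apply: (reducible_rel Hg).
  by apply: reducible_cat; [|apply: reducible_cat]; try apply: reducible_neg.
have [g [Rg Hg]] := HF x (- x); rewrite addrN in Hg.
apply: (@reducible_rel _ _ (F x ++ fneg (F 0) ++ fneg g)).
  by apply: (inR_ext (inR_neg Hg)); coef_ring.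
by apply: reducible_cat => //; apply: reducible_cat; apply: reducible_neg.
Qed.

Lemma reducible_linear (F : H n -> fsum n) :
  (forall x y, inR (F (x + y) ++ fneg (F x) ++ fneg (F y))) ->
  (forall i, reducible (F (ev i))) -> forall a, reducible (F a).
Proof.
move=> HF; apply: reducible_additive => x y; exists [::].
by split; [exact: reducible_nil | rewrite !catA cats0 -!catA].
Qed.

Lemma reducible_tsym a b c d : reducible (tsym a b c d).
Proof.
apply: (reducible_linear (F := fun x => tsym x b c d)) a => [x y|i].
  exact: inR_relator (rel_lin1 x y b c d).
apply: (reducible_linear (F := fun x => tsym (ev i) x c d)) b => [x y|j].
  exact: inR_relator (rel_lin2 _ x y c d).
apply: (reducible_linear (F := fun x => tsym (ev i) (ev j) x d)) c => [x y|k].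
  exact: inR_relator (rel_lin3 _ _ x y d).
apply: (reducible_linear (F := fun x => tsym (ev i) (ev j) (ev k) x)) d => [x y|l].
  exact: inR_relator (rel_lin4 _ _ _ x y).
exact: red_t_basis.
Qed.

Lemma reducible_ssym_basis (i j : 'I_n) : reducible (ssym (ev i) (ev j)).
Proof.
case: (ltngtP i j) => [ij | ji | /val_inj ij].
- by by_normal (i, i, j, j, false).
- apply: (reducible_eq (inR_relator (rel_ssym _ _))).
  by by_normal (j, j, i, i, false).
- by subst; apply/inR_reducible/inR_relator/rel_s0.
Qed.

(* By (6), s(-,b) is additive up to the reducible term t(x,b;y,b); with (4)
   this extends reducibility of s from basis vectors to all pairs. *)
Lemma reducible_ssym_left b : (forall i, reducible (ssym (ev i) b)) ->
  forall a, reducible (ssym a b).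
Proof.
apply: (reducible_additive (F := fun x => ssym x b)) => x y.
exists (fneg (tsym x b y b)); split; first exact/reducible_neg/reducible_tsym.
exact: inR_relator (rel_sadd x y b).
Qed.

Lemma reducible_ssym a b : reducible (ssym a b).
Proof.
apply: reducible_ssym_left => i; apply: (reducible_eq (inR_relator (rel_ssym _ _))).
by apply: reducible_ssym_left => j; exact: reducible_ssym_basis.
Qed.

Lemma reducible_every f : reducible f.
Proof.
apply: reducible_all => -[[[[a b] c] d]|[a b]]; [exact: reducible_tsym | exact: reducible_ssym].
Qed.
End Reduction.

Section Duality.
Variable n : nat.
Implicit Types (p q r s : 'I_n) (x y : nidx n).

Lemma delta4_perm p q r s (w0 w1 w2 w3 : 'I_n) : ~~ perm_eq [:: w0; w1; w2; w3] [:: p; q; r; s] ->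
  ((w0 == p)%:R * (w1 == q)%:R * (w2 == r)%:R * (w3 == s)%:R : int) = 0.
Proof.
move=> Hperm; do 4 (case: eqP => [?|_]; last by rewrite ?mulr0 ?mul0r).
by subst; rewrite perm_refl in Hperm.
Qed.

Lemma perm_count (V W : seq 'I_n) :
  (forall P : pred 'I_n, count P V = count P W) -> perm_eq V W.
Proof. by move=> H; apply/permP. Qed.

Lemma nperm_trans (U V W : seq 'I_n) : perm_eq U V -> ~~ perm_eq V W -> ~~ perm_eq U W.
Proof. by move=> UV; apply: contra => UW; rewrite perm_sym in UV; exact: perm_trans UV UW. Qed.

Lemma nperm_transr (U V W : seq 'I_n) : ~~ perm_eq U V -> perm_eq V W -> ~~ perm_eq U W.
Proof. by move=> UV VW; apply: contra UV => UW; rewrite perm_sym in VW; exact: perm_trans UW VW. Qed.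

Ltac perm_by_count := apply: perm_count => P /=; lia.

Lemma Tform_expand A B C D : Tform A B C D =
    A 0%N * B 1%N * C 2%N * D 3%N - A 0%N * B 1%N * C 3%N * D 2%N
  - A 0%N * B 3%N * C 1%N * D 2%N + A 0%N * B 3%N * C 2%N * D 1%N
  - A 1%N * B 0%N * C 2%N * D 3%N + A 1%N * B 0%N * C 3%N * D 2%N
  - A 1%N * B 2%N * C 0%N * D 3%N + A 1%N * B 2%N * C 3%N * D 0%N
  + A 2%N * B 1%N * C 0%N * D 3%N - A 2%N * B 1%N * C 3%N * D 0%N
  + A 2%N * B 3%N * C 0%N * D 1%N - A 2%N * B 3%N * C 1%N * D 0%N
  + A 3%N * B 0%N * C 1%N * D 2%N - A 3%N * B 0%N * C 2%N * D 1%N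
  - A 3%N * B 2%N * C 0%N * D 1%N + A 3%N * B 2%N * C 1%N * D 0%N.
Proof. rewrite /Tform; ring. Qed.

Lemma odot_form_expand A B : odot_form A B =
    A 0%N * B 1%N * A 2%N * B 3%N - A 0%N * B 1%N * A 3%N * B 2%N
  - A 0%N * B 3%N * A 1%N * B 2%N + A 0%N * B 3%N * A 2%N * B 1%N
  - A 1%N * B 0%N * A 2%N * B 3%N + A 1%N * B 0%N * A 3%N * B 2%N
  + A 3%N * B 0%N * A 1%N * B 2%N - A 3%N * B 0%N * A 2%N * B 1%N.
Proof. rewrite /odot_form; ring. Qed.

Lemma Tel_support p q r s (w0 w1 w2 w3 : 'I_n) :
  ~~ perm_eq [:: w0; w1; w2; w3] [:: p; q; r; s] ->
  Tel (ev p) (ev q) (ev r) (ev s) [tuple w0; w1; w2; w3] = 0.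
Proof.
move=> Hperm; rewrite Tel_tensor tensor_of_word Tform_expand /letters !evE.
by rewrite !delta4_perm ?subrr ?addr0 //; apply: nperm_trans Hperm; perm_by_count.
Qed.

Lemma odot_support p q (w0 w1 w2 w3 : 'I_n) :
  ~~ perm_eq [:: w0; w1; w2; w3] [:: p; q; p; q] ->
  odot (ev p) (ev q) [tuple w0; w1; w2; w3] = 0.
Proof.
move=> Hperm; rewrite odot_tensor tensor_of_word odot_form_expand /letters !evE.
by rewrite !delta4_perm ?subrr ?addr0 //; apply: nperm_trans Hperm; perm_by_count.
Qed.

Definition nletters x : seq 'I_n := let: (a, b, c, d, _) := x in [:: a; b; c; d].

Lemma normalP (a b c d : 'I_n) t : normal (a, b, c, d, t) ->
  [/\ a = b, (b < c)%N, c = d & t = false] \/ [/\ a = b, (b < c)%N, (c < d)%N & t = false] \/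
  [/\ (a < b)%N, b = c, (c < d)%N & t = false] \/ [/\ (a < b)%N, (b < c)%N, c = d & t = false] \/
  [/\ (a < b)%N, (b < c)%N & (c < d)%N].
Proof.
rewrite /normal => /orP[/and4P[/eqP ? ? /eqP ? /negbTE ?] | /or4P[]]; first by left.
- by move=> /and4P[/eqP ? ? ? /negbTE ?]; right; left.
- by move=> /and4P[? /eqP ? ? /negbTE ?]; do 2 right; left.
- by move=> /and4P[? ? /eqP ? /negbTE ?]; do 3 right; left.
- by move=> /and3P[? ? ?]; do 4 right.
Qed.

Lemma nletters_sorted x : normal x -> sorted (fun u v : 'I_n => (u <= v)%N) (nletters x).
Proof.
case: x => [[[[a b] c] d] t] /normalP[|[|[|[]]]] [] *; subst => /=; apply/and4P; split => //; lia.
Qed.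

Lemma nletters_perm_eq x y : normal x -> normal y ->
  perm_eq (nletters x) (nletters y) -> nletters x = nletters y.
Proof.
move=> nx ny; apply: (@sorted_eq _ (fun u v : 'I_n => (u <= v)%N)) (nletters_sorted nx)
  (nletters_sorted ny) => [u v w|u v /andP[uv vu]]; first exact: leq_trans.
by apply: val_inj; apply/eqP; rewrite eqn_leq uv vu.
Qed.

Lemma nsym_support x (w0 w1 w2 w3 : 'I_n) : ~~ perm_eq [:: w0; w1; w2; w3] (nletters x) ->
  gen (nsym x) [tuple w0; w1; w2; w3] = 0.
Proof.
case: x => [[[[a b] c] d] t] /= Hperm; rewrite /nsym.
case: (a =P b) => [?|_]; [case: (c =P d) => [?|_] | case: (b =P c) => [?|_];
  [|case: (c =P d) => [?|_]]]; subst => /=; rewrite ?if_same.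
- by apply: odot_support; apply: nperm_transr Hperm _; perm_by_count.
all: try by apply: Tel_support; apply: nperm_transr Hperm _; perm_by_count.
by case: t; apply: Tel_support; apply: nperm_transr Hperm _; perm_by_count.
Qed.

Lemma ncoord_support y (u : Tk n 4) :
  (forall w0 w1 w2 w3, perm_eq [:: w0; w1; w2; w3] (nletters y) ->
     u [tuple w0; w1; w2; w3] = 0) -> ncoord y u = 0.
Proof.
case: y => [[[[a b] c] d] t] /= Hu; rewrite /ncoord.
case: (a =P b) => [?|_]; [case: (c =P d) => [?|_] | case: (b =P c) => [?|_];
  [|case: (c =P d) => [?|_]]]; subst => /=; rewrite ?Hu ?oppr0 ?subr0 //; try perm_by_count.
by case: t; rewrite ?Hu ?oppr0 ?subr0 //; perm_by_count.
Qed.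

Lemma ncoord_nsym_same (a b c d : 'I_n) t t' :
  normal (a, b, c, d, t) -> normal (a, b, c, d, t') ->
  ncoord (a, b, c, d, t') (gen (nsym (a, b, c, d, t))) = (t == t')%:R.
Proof.
move=> nx ny; case/normalP: nx => [|[|[|[]]]] [] *; subst;
  case/normalP: ny => [|[|[|[]]]] [] *; subst; try lia;
  rewrite /ncoord /nsym; decide_letters; rewrite /= ?Tel_tensor ?odot_tensor
  ?tensor_of_word /Tform /odot_form /letters ?evE; decide_letters; rewrite /=; try ring.
all: by case: t; case: t'; rewrite /= ?Tel_tensor ?tensor_of_word /Tform /letters ?evE;
  decide_letters; rewrite /=; ring.
Qed.

Lemma ncoord_nsym x y : normal x -> normal y -> ncoord y (gen (nsym x)) = (x == y)%:R.
Proof.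
move=> nx ny; have [Pxy | nPxy] := boolP (perm_eq (nletters x) (nletters y)).
  move: nx ny (nletters_perm_eq nx ny Pxy) => {Pxy}.
  case: x => [[[[a b] c] d] t]; case: y => [[[[a' b'] c'] d'] t'] nx ny [????]; subst.
  by rewrite ncoord_nsym_same // !xpair_eqE !eqxx.
have -> : (x == y) = false by apply: contraNF nPxy => /eqP ->.
apply: ncoord_support => w0 w1 w2 w3 Hw; apply: nsym_support.
by apply: contra nPxy => Hx; rewrite perm_sym in Hx; exact: perm_trans Hx Hw.
Qed.

Lemma ncoordD y (u v : Tk n 4) : ncoord y (u + v) = ncoord y u + ncoord y v.
Proof.
case: y => [[[[a b] c] d] t]; rewrite /ncoord.
by repeat case: ifP => _; rewrite !addfE; ring.
Qed.
Lemma ncoord0 y : ncoord y (0 : Tk n 4) = 0.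
Proof.
case: y => [[[[a b] c] d] t]; rewrite /ncoord.
by repeat case: ifP => _; rewrite !ffunE; ring.
Qed.
Lemma ncoordMz y (u : Tk n 4) (m : int) : ncoord y (u *~ m) = ncoord y u * m.
Proof.
case: y => [[[[a b] c] d] t]; rewrite /ncoord.
by repeat case: ifP => _; rewrite !ffunMzE !mulrzz; ring.
Qed.

Lemma ncoord_ncomb y (c : nidx n -> int) : normal y -> ncoord y (Phi (ncomb c)) = c y.
Proof.
move=> ny; rewrite /Phi /ncomb big_map (big_morph (ncoord y) (ncoordD y) (ncoord0 y)).
rewrite big_seq (eq_bigr (fun x => if x == y then c y else 0)); last first.
  move=> x; rewrite mem_normal_enum => nx /=; rewrite ncoordMz ncoord_nsym //.
  by case: eqP => [->|_]; rewrite ?mul1r ?mul0r.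
rewrite -big_seq (bigD1_seq y) ?normal_enum_uniq ?mem_normal_enum //= eqxx big1 ?addr0 //.
by move=> x /negbTE ->.
Qed.
End Duality.

Section Rigidity.
Variable n : nat.
Variable z : Tk n 4.
Hypothesis z_rot : rot_invariant z.
Hypothesis z_tail : tail_law z.
Hypothesis z_coord : forall y : nidx n, normal y -> ncoord y z = 0.
Local Notation Y i j k l := (z [tuple i; j; k; l]).

(* The coefficients of z as a function of four letters; the facts about
   them that `lia` combines are first put in this form, so that equal
   coefficients are syntactically equal atoms. *)
Definition zc (i j k l : 'I_n) := Y i j k l.
Lemma zcE i j k l : Y i j k l = zc i j k l.
Proof. by []. Qed.
Ltac zc_lia := rewrite ?zcE; lia.

Ltac coord_eq y :=
  have := z_coord (y := y); rewrite /ncoord /normal; decide_letters; rewrite /= => /(_ isT).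

(* We show that every coefficient of z vanishes, sorting words by the
   pattern of repeated letters; rotation invariance lets us fix where the
   pattern starts. *)
Lemma vanish_aaab (a b : 'I_n) : Y a a a b = 0.
Proof. by have := z_tail a a a b; rewrite -z_rot; zc_lia. Qed.

Lemma vanish_aabb_lt (a b : 'I_n) : (a < b)%N -> Y a a b b = 0 /\ Y a b a b = 0.
Proof.
move=> ab; coord_eq (a, a, b, b, false).
by have := z_tail a a b b; rewrite (z_rot a b b a); zc_lia.
Qed.

Lemma vanish_aabb (a b : 'I_n) : a != b -> Y a a b b = 0.
Proof.
case: (ltngtP a b) => [ab | ba | /val_inj ->]; last by rewrite eqxx.
- by case: (vanish_aabb_lt ab).
- by rewrite z_rot z_rot; case: (vanish_aabb_lt ba).
Qed.

Lemma vanish_abab (a b : 'I_n) : a != b -> Y a b a b = 0.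
Proof.
case: (ltngtP a b) => [ab | ba | /val_inj ->]; last by rewrite eqxx.
- by case: (vanish_aabb_lt ab).
- by rewrite z_rot; case: (vanish_aabb_lt ba).
Qed.

(* A letter r repeated next to two other letters p < q: the normal index
   reading Y r r p q depends on the position of r relative to p and q. *)
Lemma vanish_rrpq_lt (r p q : 'I_n) : r != p -> r != q -> (p < q)%N -> Y r r p q = 0.
Proof.
move=> rp rq pq; apply/eqP; rewrite -oppr_eq0; apply/eqP.
case: (ltngtP r p) => [rp' | pr | /val_inj rp']; last by rewrite rp' eqxx in rp.
  by coord_eq (r, r, p, q, false).
case: (ltngtP r q) => [rq' | qr | /val_inj rq']; last by rewrite rq' eqxx in rq.
  by coord_eq (p, r, r, q, false).
by coord_eq (p, q, r, r, false).
Qed.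

Lemma vanish_rr_lt (r p q : 'I_n) : r != p -> r != q -> (p < q)%N ->
  [/\ Y r r p q = 0, Y r r q p = 0, Y r p r q = 0 & Y r q r p = 0].
Proof.
move=> rp rq pq; have := vanish_rrpq_lt rp rq pq.
have := z_tail r r p q; have := z_tail r r q p; have := z_tail r p r q.
rewrite (z_rot r p q r) (z_rot r q p r) !zcE; split; lia.
Qed.

Lemma vanish_rr (r p q : 'I_n) : r != p -> r != q -> p != q -> Y r r p q = 0 /\ Y r p r q = 0.
Proof.
move=> rp rq; case: (ltngtP p q) => [pq | qp | /val_inj ->]; last by rewrite eqxx.
- by case: (vanish_rr_lt rp rq pq).
- by case: (vanish_rr_lt rq rp qp).
Qed.

Lemma vanish_rrpq (r p q : 'I_n) : r != p -> r != q -> p != q -> Y r r p q = 0.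
Proof. by move=> rp rq pq; case: (vanish_rr rp rq pq). Qed.

Lemma vanish_rprq (r p q : 'I_n) : r != p -> r != q -> p != q -> Y r p r q = 0.
Proof. by move=> rp rq pq; case: (vanish_rr rp rq pq). Qed.

(* Four distinct sorted letters: the two normal indices and the tail law
   kill the six words starting with the smallest letter. *)
Lemma vanish_sorted4 (a b c d : 'I_n) : (a < b)%N -> (b < c)%N -> (c < d)%N ->
  [/\ Y a b c d = 0, Y a b d c = 0 & Y a c b d = 0] /\
  [/\ Y a c d b = 0, Y a d b c = 0 & Y a d c b = 0].
Proof.
move=> ab bc cd; coord_eq (a, b, c, d, false); coord_eq (a, b, c, d, true).
have := z_tail a c b d; have := z_tail a b c d; have := z_tail a d b c; have := z_tail a b d c.
rewrite !zcE; do 2 split; lia.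
Qed.

Lemma vanish_min4 (a b c d : 'I_n) : (a < b)%N -> (a < c)%N -> (a < d)%N ->
  b != c -> b != d -> c != d -> Y a b c d = 0.
Proof.
move=> ab ac ad /eqP bc /eqP bd /eqP cd.
have lt_neq (u v : 'I_n) : u <> v -> (u < v)%N \/ (v < u)%N.
  by move=> uv; case: (ltngtP u v) => [| | /val_inj] ; [left | right |].
case: (lt_neq _ _ bc) => h1; case: (lt_neq _ _ bd) => h2; case: (lt_neq _ _ cd) => h3;
  try lia.
- by have [[? ? ?] [? ? ?]] := vanish_sorted4 ab h1 h3.
- by have [[? ? ?] [? ? ?]] := vanish_sorted4 ab h2 h3.
- by have [[? ? ?] [? ? ?]] := vanish_sorted4 ad h2 h1.
- by have [[? ? ?] [? ? ?]] := vanish_sorted4 ac h1 h2.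
- by have [[? ? ?] [? ? ?]] := vanish_sorted4 ac h3 h2.
- by have [[? ? ?] [? ? ?]] := vanish_sorted4 ad h3 h1.
Qed.

Lemma vanish_distinct (a b c d : 'I_n) : a != b -> a != c -> a != d -> b != c -> b != d ->
  c != d -> Y a b c d = 0.
Proof.
move=> ab ac ad bc bd cd.
have neq (u v : 'I_n) : u != v -> (u : nat) <> v by move=> /eqP uv /val_inj.
move: (neq _ _ ab) (neq _ _ ac) (neq _ _ ad) (neq _ _ bc) (neq _ _ bd) (neq _ _ cd) => *.
have [[? [? ?]] | [[? [? ?]] | [[? [? ?]] | [? [? ?]]]]] :
  ((a < b)%N /\ (a < c)%N /\ (a < d)%N) \/ ((b < a)%N /\ (b < c)%N /\ (b < d)%N) \/
  ((c < a)%N /\ (c < b)%N /\ (c < d)%N) \/ ((d < a)%N /\ (d < b)%N /\ (d < c)%N) by lia.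
- exact: vanish_min4.
- by rewrite -z_rot; apply: vanish_min4; rewrite // eq_sym.
- by rewrite z_rot z_rot; apply: vanish_min4; rewrite // eq_sym.
- by rewrite z_rot; apply: vanish_min4; rewrite // eq_sym.
Qed.

Ltac by_rotation lem :=
  let side := solve [done | by rewrite eq_sym] in
  first [ by apply: lem; side | by rewrite z_rot; apply: lem; side
        | by rewrite 2!z_rot; apply: lem; side | by rewrite 3!z_rot; apply: lem; side ].

Lemma vanish_all (w0 w1 w2 w3 : 'I_n) : Y w0 w1 w2 w3 = 0.
Proof.
case: (eqVneq w0 w1) => [?|?]; case: (eqVneq w0 w2) => [?|?]; case: (eqVneq w0 w3) => [?|?];
case: (eqVneq w1 w2) => [?|?]; case: (eqVneq w1 w3) => [?|?]; case: (eqVneq w2 w3) => [?|?];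
subst; try by match goal with H : is_true (?x != ?x) |- _ => rewrite eqxx in H end.
all: first [ by_rotation vanish_aaab | by_rotation vanish_aabb | by_rotation vanish_abab
           | by_rotation vanish_rrpq | by_rotation vanish_rprq | exact: vanish_distinct ].
Qed.
End Rigidity.

Lemma rigidity n (z : Tk n 4) : rot_invariant z -> tail_law z ->
  (forall y : nidx n, normal y -> ncoord y z = 0) -> z = 0.
Proof.
by move=> z_rot z_tail z_coord; apply: tk4_ext => i j k l; rewrite ffunE; exact: vanish_all.
Qed.

Section Conclusion.
Variable n : nat.

(* Surjectivity onto D_2(H): x minus the normal combination with the
   coordinates of x satisfies the hypotheses of rigidity. *)
Lemma D2_in_image (x : Tk n 4) : Dk (k := 2) x -> exists f : fsum n, Phi f = x.
Proof.
move=> [x_HL /bmap_eq0P x_rot]; exists (ncomb (fun y => ncoord y x)).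
have [R0 RD RN] := rot_invariant_subgroup n; have [L0 LD LN] := tail_law_subgroup n.
apply/eqP; rewrite eq_sym -subr_eq0; apply/eqP; apply: rigidity.
- by apply: RD x_rot (RN _ (Phi_rot_invariant _)).
- by apply: LD (HL_tail_law x_HL) (LN _ (HL_tail_law (Phi_D2 _).1)).
- by move=> y ny; rewrite ncoordD -mulrN1z ncoordMz ncoord_ncomb // mulrN1 subrr.
Qed.

(* Injectivity: if Phi f = 0, reduce f to a normal combination modulo R;
   its coefficients are its coordinates, hence zero, so f lies in R. *)
Lemma ker_Phi_inR (f : fsum n) : Phi f = 0 -> inR f.
Proof.
move=> Phi_f; have [c Hc] := reducible_every f.
have Phi_c : Phi (ncomb c) = 0.
  by move/eqP: (Phi_inR Hc); rewrite Phi_cat Phi_neg Phi_f add0r oppr_eq0 => /eqP.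
have c0 y : normal y -> c y = 0 by move=> ny; rewrite -(ncoord_ncomb c ny) Phi_c ncoord0.
apply: (inR_ext Hc) => s; rewrite coef_cat coef_neg coef_ncomb big_seq_cond big1 ?oppr0 ?addr0 //.
by move=> x /andP[]; rewrite mem_normal_enum => /c0.
Qed.
End Conclusion.

Unset Implicit Arguments.
Set Strict Implicit.

Theorem proposition2p1 (g : nat) (hg : (0 < g)%N) :
  (forall r : fsum (2 * g), relator r -> Phi r = 0) /\
  (forall x : Tk (2 * g) 4, Dk (k := 2) x <-> exists f : fsum (2 * g), Phi f = x) /\
  (forall f : fsum (2 * g), Phi f = 0 -> inR f).
Proof.
split; first exact: Phi_relator.
split; last exact: ker_Phi_inR.
by move=> x; split=> [|[f <-]]; [exact: D2_in_image | exact: Phi_D2].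
Qed.
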